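(* Let $0\le a<b$ and let $f:[a,b]\to[a,b]$ be a continuous map, with $[a,b]$ carrying the Euclidean metric. If $f$ has the shadowing property, then the set-valued map $F$ on $X=[-b,-a]\cup[a,b]$ defined by $F(x)=\{f(-x),-f(-x)\}$ for $x\in[-b,-a]$ and $F(x)=\{f(x),-f(x)\}$ for $x\in[a,b]$ also has the shadowing property.
   Context: A single-valued continuous map $f$ on a metric space $(Y,d)$ has the shadowing property if for every $\varepsilon>0$ there is $\delta>0$ such that for every sequence $\{x_n\}_{n\ge0}$ with $d(f(x_n),x_{n+1})<\delta$ for all $n$, there is $x\in Y$ with $d(f^n(x),x_n)<\varepsilon$ for all $n\ge 0$. For a set-valued map $F:X\to 2^X$ ($2^X$ = nonempty compact subsets), a $\delta$-pseudo-orbit is a sequence $\{x_n\}_{n\ge0}$ with $d(x_{n+1},F(x_n))<\delta$ for all $n$, and an $F$-orbit is a sequence $(y_n)_{n\ge0}$ with $y_{n+1}\in F(y_n)$ for all $n$; $F$ has the shadowing property if for every $\varepsilon>0$ there is $\delta>0$ such that for each $\delta$-pseudo-orbit $\{x_n\}$ there is an $F$-orbit $(y_n)$ with $d(x_n,y_n)<\varepsilon$ for all $n$. *)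

From Stdlib Require Import Reals.
Open Scope R_scope.

Definition inI (a b x : R) : Prop := a <= x <= b.

Definition maps_into (a b : R) (f : R -> R) : Prop :=
  forall x, inI a b x -> inI a b (f x).

Definition continuous_on_I (a b : R) (f : R -> R) : Prop :=
  forall x, inI a b x -> forall eps, 0 < eps -> exists delta, 0 < delta /\
    forall y, inI a b y -> Rabs (y - x) < delta -> Rabs (f y - f x) < eps.

Definition shadowing (Y : R -> Prop) (f : R -> R) : Prop :=
  forall eps, 0 < eps -> exists delta, 0 < delta /\
    forall xs : nat -> R, (forall n, Y (xs n)) ->
      (forall n, Rabs (f (xs n) - xs (S n)) < delta) ->
      exists x, Y x /\ forall n, Rabs (Nat.iter n f x - xs n) < eps.

(* Set-valued maps F : X -> 2^X are given by their membership relation: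
   F x y  means  y ∈ F(x).  Since every value F(x) is a nonempty compact set,
   d(z, F(x)) = inf_{y ∈ F(x)} |z - y| is attained, so d(z, F(x)) < delta
   iff some y ∈ F(x) has |z - y| < delta. *)
Definition sv_shadowing (X : R -> Prop) (F : R -> R -> Prop) : Prop :=
  forall eps, 0 < eps -> exists delta, 0 < delta /\
    forall xs : nat -> R, (forall n, X (xs n)) ->
      (forall n, exists y, F (xs n) y /\ Rabs (xs (S n) - y) < delta) ->
      exists ys : nat -> R, (forall n, X (ys n)) /\
        (forall n, F (ys n) (ys (S n))) /\
        (forall n, Rabs (xs n - ys n) < eps).

Definition symX (a b x : R) : Prop := inI (- b) (- a) x \/ inI a b x.

Definition symF (a b : R) (f : R -> R) (x y : R) : Prop :=
  (inI (- b) (- a) x /\ (y = f (- x) \/ y = - f (- x))) \/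
  (inI a b x /\ (y = f x \/ y = - f x)).

(* The absolute value maps X = [-b,-a] ∪ [a,b] onto [a,b] and conjugates F to f:
   y ∈ F(x) exactly when |y| = f(|x|).  Since ||u| - |v|| <= |u - v|, a
   pseudo-orbit of F projects to a pseudo-orbit of f; an f-orbit shadowing the
   projection, given at each time the sign of the pseudo-orbit, is an F-orbit
   shadowing the original one. *)
From Stdlib Require Import Reals Lra.
Open Scope R_scope.

Lemma iter_maps_into a b f x n :
  maps_into a b f -> inI a b x -> inI a b (Nat.iter n f x).
Proof. intros Hf Hx; induction n; simpl; auto. Qed.

Lemma symX_Rabs a b x : 0 <= a -> symX a b x -> inI a b (Rabs x).
Proof.
  unfold symX, inI; intros Ha [Hx|Hx];
    [rewrite Rabs_left1 | rewrite Rabs_right]; lra.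
Qed.

Lemma symF_Rabs a b f x y :
  0 <= a -> maps_into a b f -> symF a b f x y -> Rabs y = f (Rabs x).
Proof.
  intros Ha Hf [[Hx Hy]|[Hx Hy]]; unfold inI in Hx.
  - assert (Hfx := Hf (- x) ltac:(unfold inI; lra)); unfold inI in Hfx.
    rewrite (Rabs_left1 x) by lra.
    destruct Hy as [->| ->]; [rewrite Rabs_right | rewrite Rabs_left1]; lra.
  - assert (Hfx := Hf x Hx); unfold inI in Hfx.
    rewrite (Rabs_right x) by lra.
    destruct Hy as [->| ->]; [rewrite Rabs_right | rewrite Rabs_left1]; lra.
Qed.

Definition sign_like (s z : R) : R := if Rle_dec 0 s then z else - z.

Lemma Rabs_sub_sign_like s z : Rabs (s - sign_like s z) = Rabs (Rabs s - z).
Proof.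
  unfold sign_like; destruct (Rle_dec 0 s).
  - rewrite (Rabs_right s) by lra; reflexivity.
  - rewrite (Rabs_left1 s), <- Rabs_Ropp by lra; f_equal; ring.
Qed.

Lemma symX_sign_like a b s z : inI a b z -> symX a b (sign_like s z).
Proof.
  unfold symX, sign_like, inI; intros Hz.
  destruct (Rle_dec 0 s); [right | left]; lra.
Qed.

Lemma symF_sign_like a b f s t z :
  inI a b z -> symF a b f (sign_like s z) (sign_like t (f z)).
Proof.
  unfold symF, sign_like, inI; intros Hz.
  destruct (Rle_dec 0 s), (Rle_dec 0 t); rewrite ?Ropp_involutive;
    first [right; split; [lra|] | left; split; [lra|]]; auto.
Qed.

Theorem lemma3p17 (a b : R) (f : R -> R) :
  0 <= a -> a < b ->
  maps_into a b f -> continuous_on_I a b f ->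
  shadowing (inI a b) f ->
  sv_shadowing (symX a b) (symF a b f).
Proof.
  intros Ha _ Hf _ Hsh eps Heps.
  destruct (Hsh eps Heps) as [delta [Hdelta Hshadow]].
  exists delta; split; [exact Hdelta|].
  intros xs HX Hpseudo.
  destruct (Hshadow (fun n => Rabs (xs n))) as [z [Hz Hclose]].
  - intro n; exact (symX_Rabs a b _ Ha (HX n)).
  - intro n; destruct (Hpseudo n) as [y [Hy Hdist]].
    rewrite <- (symF_Rabs a b f _ _ Ha Hf Hy), <- Rabs_Ropp.
    replace (- (Rabs y - Rabs (xs (S n)))) with (Rabs (xs (S n)) - Rabs y) by ring.
    exact (Rle_lt_trans _ _ _ (Rabs_triang_inv2 _ _) Hdist).
  - exists (fun n => sign_like (xs n) (Nat.iter n f z)); repeat split; intro n.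
    + exact (symX_sign_like a b _ _ (iter_maps_into a b f z n Hf Hz)).
    + exact (symF_sign_like a b f _ _ _ (iter_maps_into a b f z n Hf Hz)).
    + rewrite Rabs_sub_sign_like, Rabs_minus_sym; exact (Hclose n).
Qed.
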